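(* Let $n\ge2$, $1\le r\le n-1$, $\alpha,\beta,\gamma\in\mathbb{Z}_2^{n-r}$, $\alpha',\beta',\gamma'\in\mathbb{Z}_2^{r}$, $a=\alpha_{n-r-1}\oplus\beta_{n-r-1}\oplus\gamma_{n-r-1}$ and $a'=\alpha'_{r-1}\oplus\beta'_{r-1}\oplus\gamma'_{r-1}$. Then $$\mathrm{adp}^{\mathrm{XR}}_r(\alpha'\|\alpha,\beta'\|\beta\to\gamma\|\gamma')=\mathrm{padp}_{a',0}(\alpha,\beta,\gamma^{[a]})\,\mathrm{cadp}_a(\alpha'^{[a']},\beta',\gamma')+\mathrm{padp}_{\overline{a'},1}(\alpha,\beta,\gamma^{[a]})\,\mathrm{cadp}_a(\overline{\alpha'}^{[a']},\overline{\beta'},\gamma'),$$ where $\overline{a'}=a'\oplus1$.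
   Context: For $x\in\mathbb{Z}_2^m$, $x=(x_0,\dots,x_{m-1})$ is identified with the integer $\sum_i x_i2^{m-1-i}$; arithmetic on $\mathbb{Z}_2^n$ is modulo $2^n$. $\oplus$ is bitwise XOR, $x\lll r=(x_r,\dots,x_{n-1},x_0,\dots,x_{r-1})$, $\overline{x}$ is the bitwise complement, $x^{[a]}=x$ if $a=0$ and $\overline{x}$ if $a=1$, and $\alpha\|\beta$ is concatenation ($\alpha$ in the most significant positions). $\mathrm{adp}^{\mathrm{XR}}_r(\alpha,\beta\to\gamma)=4^{-n}\#\{(x,y)\in(\mathbb{Z}_2^n)^2: ((x+\alpha)\oplus(y+\beta))\lll r=((x\oplus y)\lll r)+\gamma\}$. Indices $0,\dots,7$ are identified with $\mathbb{Z}_2^3$ via $(p_0,p_1,p_2)\leftrightarrow4p_0+2p_1+p_2$; $e_0,\dots,e_7$ are the standard basis row vectors of $\mathbb{Q}^8$. $A_0$ is $\frac14$ times the $8\times8$ matrix with rows $(4,0,0,1,0,1,1,0)$, $(0,0,0,1,0,1,0,0)$, $(0,0,0,1,0,0,1,0)$, $(0,0,0,1,0,0,0,0)$, $(0,0,0,0,0,1,1,0)$, $(0,0,0,0,0,1,0,0)$, $(0,0,0,0,0,0,1,0)$, $(0,\dots,0)$, and $(A_k)_{i,j}=(A_0)_{i\oplus k,j\oplus k}$. For $\alpha,\beta,\gamma\in\mathbb{Z}_2^m$ let $\omega_i=4\alpha_i+2\beta_i+\gamma_i$. With $L_0=(1,0,1,0,1,0,1,0)$, $L_1=(0,1,0,1,0,1,0,1)$,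 $L_{0,0}=(1,1,0,0,0,0,0,0)$, $L_{0,1}=(0,0,1,1,0,0,0,0)$, $L_{1,0}=(0,0,0,0,1,1,0,0)$, $L_{1,1}=(0,0,0,0,0,0,1,1)$, define $\mathrm{cadp}_c(\alpha,\beta,\gamma)=L_cA_{\omega_0}\cdots A_{\omega_{m-1}}e_0^T$ and $\mathrm{padp}_{a,b}(\alpha,\beta,\gamma)=L_{a,b}A_{\omega_0}\cdots A_{\omega_{m-1}}e_0^T$. *)

From HB Require Import structures.
From mathcomp Require Import all_boot all_order all_algebra.
Set Implicit Arguments. Unset Strict Implicit. Unset Printing Implicit Defensive.
Import GRing.Theory Num.Theory.
Local Open Scope ring_scope.

(* Z_2^m : bit vectors x = (x_0, ..., x_{m-1}), x_0 most significant. *)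
Notation bv m := (m.-tuple bool).

Definition bv_val m (x : bv m) : nat :=
  (\sum_(i < m) (tnth x i : nat) * 2 ^ (m - i.+1))%N.

Definition bv_of_nat m (k : nat) : bv m :=
  [tuple odd ((k %% 2 ^ m) %/ 2 ^ (m - i.+1))%N | i < m].

Definition bv_add m (x y : bv m) : bv m := bv_of_nat m (bv_val x + bv_val y).

Definition bv_xor m (x y : bv m) : bv m := [tuple tnth x i (+) tnth y i | i < m].

(* x <<< r = (x_r, ..., x_{m-1}, x_0, ..., x_{r-1}) *)
Definition bv_rotl m (r : nat) (x : bv m) : bv m := rot_tuple r x.

Definition bv_compl m (x : bv m) : bv m := map_tuple negb x.
Definition bv_cond m (a : bool) (x : bv m) : bv m := if a then bv_compl x else x.

(* concatenation x || y (x in the most significant positions), as an element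
   of Z_2^n; used only when size x + size y = n. *)
Definition bv_cat n p q (x : bv p) (y : bv q) : bv n :=
  [tuple nth false (x ++ y) i | i < n].

Definition adpXR n (r : nat) (al be ga : bv n) : rat :=
  (#|[set xy : bv n * bv n |
      bv_rotl r (bv_xor (bv_add xy.1 al) (bv_add xy.2 be))
      == bv_add (bv_rotl r (bv_xor xy.1 xy.2)) ga]|%:R) / (4 ^+ n).

Definition A0_rows : seq (seq nat) :=
  [:: [:: 4; 0; 0; 1; 0; 1; 1; 0];
      [:: 0; 0; 0; 1; 0; 1; 0; 0];
      [:: 0; 0; 0; 1; 0; 0; 1; 0];
      [:: 0; 0; 0; 1; 0; 0; 0; 0];
      [:: 0; 0; 0; 0; 0; 1; 1; 0];
      [:: 0; 0; 0; 0; 0; 1; 0; 0];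
      [:: 0; 0; 0; 0; 0; 0; 1; 0];
      [:: 0; 0; 0; 0; 0; 0; 0; 0]].

Definition A0 : 'M[rat]_8 :=
  \matrix_(i < 8, j < 8) ((nth 0%N (nth [::] A0_rows i) j)%:R / 4).

(* XOR of indices in 'I_8, via (p0,p1,p2) <-> 4p0+2p1+p2 *)
Definition ord8_of_bits (p0 p1 p2 : bool) : 'I_8 :=
  inord (4 * p0 + 2 * p1 + p2)%N.
Definition bit0_8 (i : 'I_8) : bool := odd (i %/ 4)%N.
Definition bit1_8 (i : 'I_8) : bool := odd (i %/ 2)%N.
Definition bit2_8 (i : 'I_8) : bool := odd i.
Definition xor8 (i k : 'I_8) : 'I_8 :=
  ord8_of_bits (bit0_8 i (+) bit0_8 k) (bit1_8 i (+) bit1_8 k) (bit2_8 i (+) bit2_8 k).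

Definition Amat (k : 'I_8) : 'M[rat]_8 := \matrix_(i, j) A0 (xor8 i k) (xor8 j k).

Definition row8 (s : seq nat) : 'rV[rat]_8 := \row_(j < 8) (nth 0%N s j)%:R.

Definition L_c (c : bool) : 'rV[rat]_8 :=
  if c then row8 [:: 0; 1; 0; 1; 0; 1; 0; 1] else row8 [:: 1; 0; 1; 0; 1; 0; 1; 0].

Definition L_ab (a b : bool) : 'rV[rat]_8 :=
  match a, b with
  | false, false => row8 [:: 1; 1; 0; 0; 0; 0; 0; 0]
  | false, true  => row8 [:: 0; 0; 1; 1; 0; 0; 0; 0]
  | true, false  => row8 [:: 0; 0; 0; 0; 1; 1; 0; 0]
  | true, true   => row8 [:: 0; 0; 0; 0; 0; 0; 1; 1]
  end.

Definition e0T : 'cV[rat]_8 := delta_mx 0 0.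

Definition omega m (al be ga : bv m) (i : 'I_m) : 'I_8 :=
  ord8_of_bits (tnth al i) (tnth be i) (tnth ga i).

Definition Aprod m (al be ga : bv m) : 'M[rat]_8 :=
  \prod_(i < m) Amat (omega al be ga i).

Definition cadp (c : bool) m (al be ga : bv m) : rat :=
  (L_c c *m Aprod al be ga *m e0T) 0 0.

Definition padp (a b : bool) m (al be ga : bv m) : rat :=
  (L_ab a b *m Aprod al be ga *m e0T) 0 0.

From mathcomp Require Import all_boot all_order all_algebra.
From mathcomp Require Import zify ring.
Set Implicit Arguments. Unset Strict Implicit. Unset Printing Implicit Defensive.
Import GRing.Theory Num.Theory.

(* The matrices [A_k] are the transition matrices of a carry automaton whose
   state is the triple of carries of [x + alpha], [y + beta] and
   [(x (+) y) + gamma]: [4 ^ m] times entry [(i, j)] of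
   [A_{omega_0} ... A_{omega_{m-1}}] counts the pairs [(x, y)] that satisfy
   [(x + alpha) (+) (y + beta) = (x (+) y) + gamma] bitwise and drive the
   automaton from state [j] below the least significant bit to state [i] above
   the most significant one.  Rotating by [r] cuts the n-bit equation into two
   such automata coupled only through their carries, so [adp^XR_r] is a sum, over
   the coupling states, of products of entries of the two matrix products.
   Complementing inputs permutes the states by a XOR, which turns these entries
   into [padp] and [cadp] values, and the parity of the most significant bits
   of the two parts fixes the coupling carries up to the two terms of the
   formula. *)

Fixpoint nat_of_bits (s : seq bool) : nat :=
  if s is b :: t then b * 2 ^ size t + nat_of_bits t else 0.

Lemma nat_of_bits_lt s : nat_of_bits s < 2 ^ size s.
Proof. by elim: s => [|[] t IH] //=; rewrite expnS; lia. Qed.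

Lemma bv_valE m (x : bv m) : bv_val x = nat_of_bits x.
Proof.
rewrite /bv_val; under eq_bigr => i _ do rewrite (tnth_nth false).
case: x => s /= /eqP <-; elim: s => [|b t IH]; first by rewrite big_ord0.
by rewrite big_ord_recl /= IH subSS subn0.
Qed.

Lemma odd_nat_of_bits_div s i : i < size s ->
  odd (nat_of_bits s %/ 2 ^ (size s - i.+1)) = nth false s i.
Proof.
elim: s i => [|b t IH] [|i] //= Hi.
  rewrite subn1 /= divnDl ?dvdn_mull // mulnK ?expn_gt0 //.
  by rewrite divn_small ?nat_of_bits_lt // addn0; case: b.
rewrite subSS -IH //; set e := size t - i.+1.
have -> : 2 ^ size t = 2 ^ (size t - e).-1.+1 * 2 ^ e.
  by rewrite prednK -?expnD; [congr (_ ^ _)|]; rewrite /e; lia.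
by rewrite mulnA divnMDl ?expn_gt0 // oddD oddM expnS oddM andbF.
Qed.

Lemma bv_of_nat_bits m k (s : bv m) : k %% 2 ^ m = nat_of_bits s -> bv_of_nat m k = s.
Proof.
move=> Hk; apply: eq_from_tnth => i; rewrite tnth_mktuple Hk (tnth_nth false).
by rewrite -[m in 2 ^ (m - _)](size_tuple s) odd_nat_of_bits_div ?size_tuple.
Qed.

Definition maj (a b c : bool) := (a && b) || (a && c) || (b && c).

Fixpoint adc (c : bool) (x y : seq bool) : bool * seq bool :=
  match x, y with
  | b :: x', d :: y' => let p := adc c x' y' in (maj b d p.1, b (+) d (+) p.1 :: p.2)
  | _, _ => (c, [::])
  end.

Lemma size_adc c x y : size x = size y -> size (adc c x y).2 = size x.
Proof. by elim: x y => [|b x IH] [|d y] //= [/IH ->]. Qed.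

Lemma adcE (c : bool) x y : size x = size y ->
  nat_of_bits x + nat_of_bits y + c = (adc c x y).1 * 2 ^ size x + nat_of_bits (adc c x y).2.
Proof.
elim: x y => [|b x IH] [|d y] //=; first by rewrite addnC muln1.
move=> [Hs]; rewrite size_adc // Hs expnS.
move: (IH _ Hs); rewrite Hs; case: (adc c x y) => c' s /=.
by case: b; case: d; case: c'; rewrite /maj /=; lia.
Qed.

Lemma adc_cat c x1 x2 y1 y2 : size x1 = size y1 -> size x2 = size y2 ->
  adc c (x1 ++ x2) (y1 ++ y2) =
  let p := adc c x2 y2 in let q := adc p.1 x1 y1 in (q.1, q.2 ++ p.2).
Proof.
move=> H1 H2; elim: x1 y1 H1 => [|b x IH] [|d y] //=; last by move=> [/IH ->].
by case: x2 y2 H2 => [|? ?] [|? ?] //=; case: adc.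
Qed.

Lemma val_bv_add m (x y : bv m) : val (bv_add x y) = (adc false x y).2.
Proof.
have Hs : size (adc false x y).2 == m by rewrite size_adc ?size_tuple.
rewrite /bv_add (@bv_of_nat_bits m _ (Tuple Hs)) //= !bv_valE.
have := @adcE false x y; rewrite addn0 => -> //; last by rewrite !size_tuple.
rewrite size_tuple modnMDl modn_small //.
by have := nat_of_bits_lt (adc false x y).2; rewrite (eqP Hs).
Qed.

Definition xors (s t : seq bool) := [seq p.1 (+) p.2 | p <- zip s t].

Lemma size_xors s t : size s = size t -> size (xors s t) = size s.
Proof. by move=> H; rewrite size_map size_zip H minnn. Qed.

Lemma xors_cat s1 s2 t1 t2 : size s1 = size t1 ->
  xors (s1 ++ s2) (t1 ++ t2) = xors s1 t1 ++ xors s2 t2.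
Proof. by move=> H; rewrite /xors zip_cat // map_cat. Qed.

Lemma val_bv_xor m (x y : bv m) : val (bv_xor x y) = xors x y.
Proof.
apply: (@eq_from_nth _ false); first by rewrite size_xors !size_tuple.
move=> i; rewrite size_tuple => Hi.
rewrite -[i]/(nat_of_ord (Ordinal Hi)) -tnth_nth tnth_mktuple.
by rewrite (nth_map (false, false)) ?nth_zip ?size_zip ?size_tuple ?minnn //= !(tnth_nth false).
Qed.

Lemma val_bv_rotl m r (x : bv m) : val (bv_rotl r x) = rot r x.
Proof. by []. Qed.

Lemma val_bv_cat n p q (x : bv p) (y : bv q) : p + q = n -> val (bv_cat n x y) = x ++ y.
Proof.
move=> H; apply: (@eq_from_nth _ false); first by rewrite size_cat !size_tuple.
move=> i; rewrite size_tuple => Hi.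
by rewrite -[i]/(nat_of_ord (Ordinal Hi)) -tnth_nth tnth_mktuple.
Qed.

Lemma ord8_subproof (p0 p1 p2 : bool) : 4 * p0 + 2 * p1 + p2 < 8.
Proof. by case: p0; case: p1; case: p2. Qed.

(* Unlike [ord8_of_bits], whose [inord] is blocked by an opaque proof, [ord8]
   reduces, so that the entries of [A0] can be checked by computation. *)
Definition ord8 (p0 p1 p2 : bool) : 'I_8 := Ordinal (ord8_subproof p0 p1 p2).

Lemma ord8_of_bitsE p0 p1 p2 : ord8_of_bits p0 p1 p2 = ord8 p0 p1 p2.
Proof. by apply: val_inj; rewrite /= inordK ?ord8_subproof. Qed.

Lemma bit0_8E p0 p1 p2 : bit0_8 (ord8 p0 p1 p2) = p0.
Proof. by case: p0; case: p1; case: p2. Qed.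

Lemma bit1_8E p0 p1 p2 : bit1_8 (ord8 p0 p1 p2) = p1.
Proof. by case: p0; case: p1; case: p2. Qed.

Lemma bit2_8E p0 p1 p2 : bit2_8 (ord8 p0 p1 p2) = p2.
Proof. by case: p0; case: p1; case: p2. Qed.

Lemma ord8_eta (i : 'I_8) : ord8 (bit0_8 i) (bit1_8 i) (bit2_8 i) = i.
Proof. by apply: val_inj; case: i => [[|[|[|[|[|[|[|[|]]]]]]]]]. Qed.

Lemma xor8E p0 p1 p2 q0 q1 q2 :
  xor8 (ord8 p0 p1 p2) (ord8 q0 q1 q2) = ord8 (p0 (+) q0) (p1 (+) q1) (p2 (+) q2).
Proof. by rewrite /xor8 !bit0_8E !bit1_8E !bit2_8E ord8_of_bitsE. Qed.

Lemma xor8K s : cancel (xor8^~ s) (xor8^~ s).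
Proof.
move=> i; rewrite -(ord8_eta i) -(ord8_eta s) !xor8E.
by rewrite -!addbA !addbb !addbF.
Qed.

Lemma xor8C i k : xor8 i k = xor8 k i.
Proof.
rewrite -(ord8_eta i) -(ord8_eta k) !xor8E.
by rewrite (addbC (bit0_8 i)) (addbC (bit1_8 i)) (addbC (bit2_8 i)).
Qed.

Lemma xor8A i k s : xor8 i (xor8 k s) = xor8 (xor8 i k) s.
Proof.
by rewrite -(ord8_eta i) -(ord8_eta k) -(ord8_eta s) !xor8E !addbA.
Qed.

Lemma sum_ord8 (R : nmodType) (F : 'I_8 -> R) :
  (\sum_(k < 8) F k = \sum_(p0 : bool) \sum_(p1 : bool) \sum_(p2 : bool) F (ord8 p0 p1 p2))%R.
Proof.
rewrite !pair_bigA /= (reindex (fun p : bool * bool * bool => ord8 p.1.1 p.1.2 p.2)) //=.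
exists (fun k => (bit0_8 k, bit1_8 k, bit2_8 k)) => [[[p0 p1] p2] _|k _] /=.
  by rewrite bit0_8E bit1_8E bit2_8E.
exact: ord8_eta.
Qed.

Definition par8 (c : 'I_8) := bit0_8 c (+) bit1_8 c (+) bit2_8 c.

(* One bit position, with bits [a b g] of [alpha beta gamma], [u v] of [x y]
   and incoming carries [c]: the sum bits satisfy the equation iff
   [a (+) b (+) g (+) par8 c] vanishes, the [u]'s and [v]'s cancelling out. *)
Definition step (a b g u v : bool) (c : 'I_8) : option 'I_8 :=
  if a (+) b (+) g (+) par8 c then None
  else Some (ord8 (maj u a (bit0_8 c)) (maj v b (bit1_8 c)) (maj (u (+) v) g (bit2_8 c))).

Fixpoint run (al be ga x y : seq bool) (c : 'I_8) : option 'I_8 :=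
  match al, be, ga, x, y with
  | a :: al', b :: be', g :: ga', u :: x', v :: y' =>
      obind (step a b g u v) (run al' be' ga' x' y' c)
  | _, _, _, _, _ => Some c
  end.

Section Run.
Variables (al be ga x y : seq bool).
Hypotheses (Hbe : size be = size al) (Hga : size ga = size al)
           (Hx : size x = size al) (Hy : size y = size al).

Lemma runE c :
  run al be ga x y c =
  if xors (adc (bit0_8 c) x al).2 (adc (bit1_8 c) y be).2 == (adc (bit2_8 c) (xors x y) ga).2
  then Some (ord8 (adc (bit0_8 c) x al).1 (adc (bit1_8 c) y be).1 (adc (bit2_8 c) (xors x y) ga).1)
  else None.
Proof.
elim: al be ga x y Hbe Hga Hx Hy => [|a al' IH] [|b be'] [|g ga'] [|u x'] [|v y'] //=.
  by rewrite ord8_eta.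
move=> [Hb] [Hg] [Hx'] [Hy']; rewrite IH // eqseq_cons.
case: (_ == _); last by rewrite andbF.
rewrite /= andbT /step /par8 !bit0_8E !bit1_8E !bit2_8E.
move: (adc _ x' al').1 (adc _ y' be').1 (adc _ (xors x' y') ga').1 => c0 c1 c2.
by case: a; case: b; case: g; case: c0; case: c1; case: c2; case: u; case: v.
Qed.

Lemma run_parity c i : al != [::] -> run al be ga x y c = Some i ->
  last false al (+) last false be (+) last false ga = par8 c.
Proof.
elim: al be ga x y Hbe Hga Hx Hy i => [|a al' IH] [|b be'] [|g ga'] [|u x'] [|v y'] //=.
move=> [Hb] [Hg] [Hx'] [Hy'] i _; case: al' IH Hb Hg Hx' Hy' => [|a' al'] IH.
  move=> /size0nil -> /size0nil -> /size0nil -> /size0nil -> /=.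
  by rewrite /step; case: ifP => //; case: a; case: b; case: g; case: (par8 c).
case: be' ga' x' y' => // b' be' [] // g' ga' [] // u' x' [] // v' y' Hb Hg Hx' Hy'.
by case E : run => [k|] //= _; rewrite -(IH _ _ _ _ Hb Hg Hx' Hy' _ _ E).
Qed.

End Run.

Local Open Scope ring_scope.

Definition step_count a b g (i k : 'I_8) : nat :=
  (\sum_(u : bool) \sum_(v : bool) (step a b g u v k == Some i))%N.

Lemma A0_entries a b g i0 i1 i2 k0 k1 k2 :
  nth 0%N (nth [::] A0_rows (ord8 (i0 (+) a) (i1 (+) b) (i2 (+) g)))
          (ord8 (k0 (+) a) (k1 (+) b) (k2 (+) g))
  = step_count a b g (ord8 i0 i1 i2) (ord8 k0 k1 k2).
Proof.
rewrite /step_count !big_bool /=.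
by case: a; case: b; case: g; case: i0; case: i1; case: i2; case: k0; case: k1; case: k2;
  vm_compute.
Qed.

Lemma AmatE a b g (i k : 'I_8) : Amat (ord8 a b g) i k = (step_count a b g i k)%:R / 4.
Proof. by rewrite -(ord8_eta i) -(ord8_eta k) /Amat /A0 !mxE !xor8E A0_entries. Qed.

Lemma Amat_xor (w s i k : 'I_8) : Amat (xor8 w s) i k = Amat w (xor8 i s) (xor8 k s).
Proof. by rewrite /Amat !mxE -!xor8A [xor8 s w]xor8C. Qed.

Fixpoint Aprod_seq (al be ga : seq bool) : 'M[rat]_8 :=
  match al, be, ga with
  | a :: al', b :: be', g :: ga' => Amat (ord8 a b g) * Aprod_seq al' be' ga'
  | _, _, _ => 1
  end.

Lemma AprodE m (al be ga : bv m) : Aprod al be ga = Aprod_seq al be ga.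
Proof.
rewrite /Aprod; under eq_bigr => i _ do rewrite /omega ord8_of_bitsE !(tnth_nth false).
case: al be ga => [al /= /eqP Hal] [be /= /eqP Hbe] [ga /= /eqP Hga].
elim: m al be ga Hal Hbe Hga => [|m IH] [|a al] [|b be] [|g ga] //=.
  by rewrite big_ord0.
by move=> [Hal] [Hbe] [Hga]; rewrite big_ord_recl -IH.
Qed.

Lemma sum_eq_Some (R : pzSemiRingType) (T : finType) (o : option T) (F : T -> R) :
  \sum_k ((o == Some k) : nat)%:R * F k = oapp F 0 o.
Proof.
case: o => [k|] /=; last by rewrite big1 // => l _; rewrite mul0r.
rewrite (bigD1 k) //= eqxx mul1r big1 ?addr0 // => l /negbTE nkl.
by rewrite (inj_eq (@Some_inj _)) eq_sym nkl mul0r.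
Qed.

Lemma sum_pair_split (R : nmodType) (A B C : finType) (f : A -> B -> C) (g : C -> A * B) :
  (forall a b, g (f a b) = (a, b)) -> (forall c, f (g c).1 (g c).2 = c) ->
  forall F : C * C -> R,
  \sum_(cc : C * C) F cc = \sum_(aa : A * A) \sum_(bb : B * B) F (f aa.1 bb.1, f aa.2 bb.2).
Proof.
move=> gK fK F; rewrite pair_bigA /=.
rewrite (reindex (fun q : A * A * (B * B) => (f q.1.1 q.2.1, f q.1.2 q.2.2))) //=.
exists (fun cc => ((g cc.1).1, (g cc.2).1, ((g cc.1).2, (g cc.2).2))).
  by move=> [[a1 a2] [b1 b2]] _ /=; rewrite !gK.
by move=> [c1 c2] _ /=; rewrite !fK.
Qed.

Lemma sum_bv_cons (R : nmodType) m (F : bv m.+1 * bv m.+1 -> R) :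
  \sum_(xy : bv m.+1 * bv m.+1) F xy =
  \sum_(uv : bool * bool) \sum_(xy : bv m * bv m)
     F ([tuple of uv.1 :: xy.1], [tuple of uv.2 :: xy.2]).
Proof.
apply: (@sum_pair_split R bool (bv m) (bv m.+1) (fun u x => [tuple of u :: x])
                      (fun x => (thead x, [tuple of behead x]))) => [u x|x] /=.
  by rewrite theadE; congr (_, _); apply: val_inj.
by rewrite -tuple_eta.
Qed.

Lemma Aprod_seq_count m (al be ga : bv m) i j :
  Aprod_seq al be ga i j =
  (\sum_(xy : bv m * bv m) ((run al be ga xy.1 xy.2 j == Some i) : nat)%:R) / 4 ^+ m.
Proof.
elim: m al be ga i => [|m IH] al be ga i.
  rewrite [al]tuple0 [be]tuple0 [ga]tuple0 /= sumr_const card_prod !card_tuple /=.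
  by rewrite mxE (inj_eq (@Some_inj _)) eq_sym expr0 divr1.
rewrite (tuple_eta al) (tuple_eta be) (tuple_eta ga) /= -mulmxE mxE sum_bv_cons /=.
have IHb := IH [tuple of behead al] [tuple of behead be] [tuple of behead ga].
rewrite /= in IHb.
under eq_bigr => k _ do rewrite AmatE IHb mulf_div -exprS.
rewrite -mulr_suml; congr (_ / _); symmetry.
have obindE (o : option 'I_8) f : ((obind f o == Some i) : nat)%:R =
    \sum_k ((o == Some k) : nat)%:R * ((f k == Some i) : nat)%:R :> rat.
  by rewrite sum_eq_Some; case: o.
under eq_bigr => uv _ do under eq_bigr => xy _ do rewrite obindE.
under eq_bigr => uv _ do rewrite exchange_big.
rewrite exchange_big; apply: eq_bigr => k _.
rewrite /step_count [in RHS]pair_bigA natr_sum big_distrl; apply: eq_bigr => uv _.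
by rewrite big_distrr; apply: eq_bigr => xy _; rewrite mulrC.
Qed.

Lemma Aprod_seq_xor s0 s1 s2 al be ga (i j : 'I_8) :
  Aprod_seq (map (addb s0) al) (map (addb s1) be) (map (addb s2) ga) i j =
  Aprod_seq al be ga (xor8 i (ord8 s0 s1 s2)) (xor8 j (ord8 s0 s1 s2)).
Proof.
set s := ord8 s0 s1 s2; have xor_s_inj := can_inj (xor8K s).
elim: al be ga i j => [|a al IH] [|b be] [|g ga] i j /=;
  try by rewrite !mxE (inj_eq xor_s_inj).
rewrite -!mulmxE !mxE (reindex_inj xor_s_inj) /=; apply: eq_bigr => k _.
have -> : ord8 (s0 (+) a) (s1 (+) b) (s2 (+) g) = xor8 (ord8 a b g) s.
  by rewrite xor8E ![_ (+) s0]addbC ![_ (+) s1]addbC ![_ (+) s2]addbC.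
by rewrite Amat_xor IH xor8K.
Qed.

Lemma Aprod_seq_parity m (al be ga : bv m) (i j : 'I_8) : (0 < m)%N ->
  par8 j != last false al (+) last false be (+) last false ga ->
  Aprod_seq al be ga i j = 0.
Proof.
rewrite eq_sym => m_gt0 par_j; rewrite Aprod_seq_count big1 ?mul0r // => xy _.
case run_i: (run _ _ _ _ _ _ == _) => //; move/eqP: run_i par_j.
move/run_parity => -> //; last by rewrite -size_eq0 size_tuple -lt0n.
all: by rewrite ?size_tuple ?eqxx.
Qed.

Lemma sum_bv_cat (R : nmodType) n r m (F : bv n * bv n -> R) : (r + m = n)%N ->
  \sum_(xy : bv n * bv n) F xy =
  \sum_(uu : bv r * bv r) \sum_(vv : bv m * bv m) F (bv_cat n uu.1 vv.1, bv_cat n uu.2 vv.2).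
Proof.
move=> rmn; subst n.
apply: (@sum_pair_split R (bv r) (bv m) (bv (r + m)%N) (fun u v => bv_cat (r + m) u v)
  (fun x => ([tuple nth false x i | i < r], [tuple nth false x (r + i)%N | i < m]))) => [u v|x].
  congr (_, _); apply: eq_from_tnth => i;
    rewrite tnth_mktuple (tnth_nth false) val_bv_cat // nth_cat size_tuple.
    by rewrite ltn_ord.
  by rewrite ltnNge leq_addr /= addKn.
apply: eq_from_tnth => i; rewrite tnth_mktuple (tnth_nth false) nth_cat size_tuple.
case: ltnP => [i_lt_r|r_le_i].
  by rewrite -[i : nat]/(nat_of_ord (Ordinal i_lt_r)) -tnth_nth tnth_mktuple.
have i_r_lt_m : (i - r < m)%N by have := ltn_ord i; lia.
by rewrite -[(i - r)%N]/(nat_of_ord (Ordinal i_r_lt_m)) -tnth_nth tnth_mktuple /= subnKC.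
Qed.

(* Rotating by [r] moves the low parts to the top, so the equation splits
   into its two parts, coupled by the carries of [x + alpha] and [y + beta]
   out of the low part and the carry of [(x (+) y) + gamma] out of the high one. *)
Lemma xr_eq_split n r m (u1 u2 : bv r) (v1 v2 : bv m) (al be ga : bv m) (al' be' ga' : bv r) :
  (r + m = n)%N ->
  (bv_rotl r (bv_xor (bv_add (bv_cat n u1 v1) (bv_cat n al' al))
                     (bv_add (bv_cat n u2 v2) (bv_cat n be' be)))
   == bv_add (bv_rotl r (bv_xor (bv_cat n u1 v1) (bv_cat n u2 v2))) (bv_cat n ga ga'))
  = (xors (adc false v1 al).2 (adc false v2 be).2
       == (adc (adc false (xors u1 u2) ga').1 (xors v1 v2) ga).2)
    && (xors (adc (adc false v1 al).1 u1 al').2 (adc (adc false v2 be).1 u2 be').2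
       == (adc false (xors u1 u2) ga').2).
Proof.
move=> rmn; have mrn : (m + r = n)%N by rewrite addnC.
have rot_cat (s1 s2 : seq bool) : size s1 = r -> rot r (s1 ++ s2) = s2 ++ s1.
  by move=> <-; exact: rot_size_cat.
rewrite -val_eqE !(val_bv_rotl, val_bv_add, val_bv_xor) !(val_bv_cat _ _ rmn).
rewrite (val_bv_cat _ _ mrn) xors_cat ?size_tuple // rot_cat ?size_xors ?size_tuple //.
rewrite !adc_cat ?size_xors ?size_tuple //= xors_cat ?size_adc ?size_tuple //.
by rewrite rot_cat ?eqseq_cat // size_xors !size_adc ?size_xors ?size_tuple.
Qed.

Lemma xr_eq_indicator n r m (u1 u2 : bv r) (v1 v2 : bv m) (al be ga : bv m) (al' be' ga' : bv r) :
  (r + m = n)%N ->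
  ((bv_rotl r (bv_xor (bv_add (bv_cat n u1 v1) (bv_cat n al' al))
                      (bv_add (bv_cat n u2 v2) (bv_cat n be' be)))
    == bv_add (bv_rotl r (bv_xor (bv_cat n u1 v1) (bv_cat n u2 v2))) (bv_cat n ga ga')) : nat)%:R
  = \sum_(i < 8) \sum_(l < 8)
      ((run al be ga v1 v2 (ord8 false false (bit2_8 l)) == Some i) : nat)%:R *
      ((run al' be' ga' u1 u2 (ord8 (bit0_8 i) (bit1_8 i) false) == Some l) : nat)%:R :> rat.
Proof.
move=> /xr_eq_split ->.
have [Hbe Hga Hv1 Hv2] :
  [/\ size be = size al, size ga = size al, size v1 = size al & size v2 = size al].
  by rewrite !size_tuple.
have [Hbe' Hga' Hu1 Hu2] :
  [/\ size be' = size al', size ga' = size al', size u1 = size al' & size u2 = size al'].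
  by rewrite !size_tuple.
pose top_eq (i : 'I_8) :=
  xors (adc (bit0_8 i) u1 al').2 (adc (bit1_8 i) u2 be').2 == (adc false (xors u1 u2) ga').2.
transitivity (\sum_(i < 8) ((run al be ga v1 v2 (ord8 false false (adc false (xors u1 u2) ga').1)
                            == Some i) : nat)%:R * (top_eq i : nat)%:R : rat).
  rewrite sum_eq_Some (runE Hbe Hga Hv1 Hv2) !bit0_8E !bit1_8E !bit2_8E; case: (_ == _) => //=.
  by rewrite /top_eq !bit0_8E !bit1_8E.
apply: eq_bigr => i _; rewrite mulrC.
under eq_bigr => l _ do rewrite mulrC.
rewrite sum_eq_Some (runE Hbe' Hga' Hu1 Hu2) !bit0_8E !bit1_8E !bit2_8E /top_eq.
by case: ifP => _; rewrite /= ?bit2_8E ?mul1r ?mul0r.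
Qed.

Lemma exchange_big2 (R : nmodType) (I J K L : finType) (F : I -> J -> K -> L -> R) :
  \sum_i \sum_j \sum_k \sum_l F i j k l = \sum_k \sum_l \sum_i \sum_j F i j k l.
Proof.
rewrite pair_bigA; under eq_bigr => p _ do rewrite pair_bigA.
by rewrite exchange_big [RHS]pair_bigA; apply: eq_bigr => q _; rewrite pair_bigA.
Qed.

Lemma card_set_sum (R : pzSemiRingType) (T : finType) (P : pred T) :
  #|[set x | P x]|%:R = \sum_x (P x : nat)%:R :> R.
Proof.
by rewrite -sum1_card natr_sum big_mkcond; apply: eq_bigr => x _; rewrite inE; case: (P x).
Qed.

Lemma adpXR_split n r m (al be ga : bv m) (al' be' ga' : bv r) : (r + m = n)%N ->
  adpXR r (bv_cat n al' al) (bv_cat n be' be) (bv_cat n ga ga') =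
  \sum_(i < 8) \sum_(l < 8)
     Aprod al be ga i (ord8 false false (bit2_8 l)) *
     Aprod al' be' ga' l (ord8 (bit0_8 i) (bit1_8 i) false).
Proof.
move=> rmn; rewrite /adpXR !AprodE card_set_sum (sum_bv_cat _ rmn).
under eq_bigr => uu _ do under eq_bigr => vv _ do rewrite xr_eq_indicator //.
under [RHS]eq_bigr => i _ do under eq_bigr => l _ do rewrite !Aprod_seq_count mulf_div -exprD.
under [RHS]eq_bigr do rewrite -mulr_suml.
rewrite -mulr_suml -rmn addnC exchange_big2; congr (_ / _).
apply: eq_bigr => i _; apply: eq_bigr => l _.
by rewrite big_distrlr exchange_big.
Qed.

Lemma val_bv_cond m s (x : bv m) : val (bv_cond s x) = map (addb s) x.
Proof. by case: s; rewrite /= ?map_id. Qed.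

Lemma bv_cond_compl m s (x : bv m) : bv_cond s (bv_compl x) = bv_cond (~~ s) x.
Proof.
apply: val_inj; rewrite !val_bv_cond /= -map_comp.
by apply: eq_map => b; case: s; case: b.
Qed.

Lemma Aprod_cond s0 s1 s2 m (al be ga : bv m) (i j : 'I_8) :
  Aprod (bv_cond s0 al) (bv_cond s1 be) (bv_cond s2 ga) i j =
  Aprod al be ga (xor8 i (ord8 s0 s1 s2)) (xor8 j (ord8 s0 s1 s2)).
Proof. by rewrite !AprodE !val_bv_cond Aprod_seq_xor. Qed.

Lemma Aprod_parity m (al be ga : bv m) (i j : 'I_8) : (0 < m)%N ->
  par8 j != nth false al m.-1 (+) nth false be m.-1 (+) nth false ga m.-1 ->
  Aprod al be ga i j = 0.
Proof.
have lastE (s : bv m) : nth false s m.-1 = last false s by rewrite -nth_last size_tuple.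
by rewrite AprodE !lastE; exact: Aprod_seq_parity.
Qed.

Lemma mulmx_e0T (L : 'rV[rat]_8) (M : 'M[rat]_8) :
  (L *m M *m e0T) 0 0 = \sum_(k < 8) L 0 k * M k 0.
Proof.
rewrite -mulmxA mxE; apply: eq_bigr => k _; rewrite mxE (bigD1 0) //= big1.
  by rewrite /e0T mxE !eqxx mulr1 addr0.
by move=> l /negbTE nl0; rewrite /e0T mxE nl0 mulr0.
Qed.

Lemma ord0_8 : 0 = ord8 false false false.
Proof. exact: val_inj. Qed.

Lemma padpE c d a m (al be ga : bv m) :
  padp c d al be (bv_cond a ga) =
  \sum_(p : bool) Aprod al be ga (ord8 c d p) (ord8 false false a).
Proof.
rewrite -[LHS]/(padp c d (bv_cond false al) (bv_cond false be) (bv_cond a ga)).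
rewrite /padp mulmx_e0T; under eq_bigr do rewrite Aprod_cond.
rewrite sum_ord8 !big_bool ord0_8 !xor8E /=.
by case: c; case: d; case: a;
  rewrite /L_ab /row8 !mxE /= ?mul0r ?mul1r ?add0r ?addr0 // addrC.
Qed.

Lemma cadpE c s0 s1 m (al be ga : bv m) :
  cadp c (bv_cond s0 al) (bv_cond s1 be) ga =
  \sum_(p0 : bool) \sum_(p1 : bool) Aprod al be ga (ord8 p0 p1 c) (ord8 s0 s1 false).
Proof.
rewrite -[LHS]/(cadp c (bv_cond s0 al) (bv_cond s1 be) (bv_cond false ga)).
rewrite /cadp mulmx_e0T; under eq_bigr do rewrite Aprod_cond.
rewrite sum_ord8 !big_bool ord0_8 !xor8E /=.
by case: c; case: s0; case: s1;
  rewrite /L_c /row8 !mxE /= ?mul0r ?mul1r ?add0r ?addr0; ring.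
Qed.

Lemma sum_carry_states_collapse (P Q : 'I_8 -> 'I_8 -> rat) (a a' : bool) :
  (forall i j, par8 j != a -> P i j = 0) -> (forall l j, par8 j != a' -> Q l j = 0) ->
  \sum_(i < 8) \sum_(l < 8)
    P i (ord8 false false (bit2_8 l)) * Q l (ord8 (bit0_8 i) (bit1_8 i) false)
  = (\sum_(p : bool) P (ord8 a' false p) (ord8 false false a))
      * (\sum_(p0 : bool) \sum_(p1 : bool) Q (ord8 p0 p1 a) (ord8 a' false false))
    + (\sum_(p : bool) P (ord8 (~~ a') true p) (ord8 false false a))
      * (\sum_(p0 : bool) \sum_(p1 : bool) Q (ord8 p0 p1 a) (ord8 (~~ a') true false)).
Proof.
move=> HP HQ.
have P0 i : P i (ord8 false false (~~ a)) = 0 by apply: HP; move: (a); case.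
have Q0 l : Q l (ord8 (~~ a') false false) = 0 by apply: HQ; move: (a'); case.
have Q1 l : Q l (ord8 a' true false) = 0 by apply: HQ; move: (a'); case.
under eq_bigr do rewrite sum_ord8 !big_bool.
rewrite sum_ord8 !big_bool /=; clear HP HQ.
by move: P0 Q0 Q1; case: a; case: a' => /= P0 Q0 Q1; rewrite !P0 !Q0 !Q1; ring.
Qed.

Theorem corollary2 (n r : nat) (hn : (2 <= n)%N) (hr1 : (1 <= r)%N)
  (hr2 : (r <= n - 1)%N)
  (al be ga : bv (n - r)) (al' be' ga' : bv r) :
  let a := nth false al (n - r - 1) (+) nth false be (n - r - 1)
             (+) nth false ga (n - r - 1) in
  let a' := nth false al' (r - 1) (+) nth false be' (r - 1) (+) nth false ga' (r - 1) in
  adpXR r (bv_cat n al' al) (bv_cat n be' be) (bv_cat n ga ga')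
  = padp a' false al be (bv_cond a ga) * cadp a (bv_cond a' al') be' ga'
    + padp (~~ a') true al be (bv_cond a ga)
      * cadp a (bv_cond a' (bv_compl al')) (bv_compl be') ga'.
Proof.
move=> a a'; have rmn : (r + (n - r) = n)%N by lia.
rewrite (adpXR_split _ _ _ _ _ _ rmn) !padpE bv_cond_compl.
rewrite (cadpE _ _ false) (cadpE _ _ true).
apply: sum_carry_states_collapse => [i j|l j] par_j;
  by apply: Aprod_parity; rewrite -?subn1 //; lia.
Qed.
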